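(* Let $p,n$ be positive integers with $\gcd(p,n)=1$, and $y\in\mathbb{Z}_n$. Then the full pointed quandle coloring quiver $\mathcal{Q}_{(\mathbb{Z}_n,y,y)}(\widetilde{\mathcal{T}(p,2)})$ is isomorphic to $K_{1,n}$, i.e. it has a single vertex (the trivial coloring) carrying $n$ loops.
   Context: $\mathbb{Z}_n$ is the dihedral quandle ($x\triangleright y=2y-x$ mod $n$) and $(\mathbb{Z}_n,y,y)$ the $2$-pointed quandle with both basepoints $y$. $P(\widetilde{\mathcal{T}(p,2)})=(Q,x_1,x_{p+1})$ with $Q=\langle x_1,\dots,x_{p+1}\mid x_p=x_2\triangleright x_{p+1},\ x_i=x_{i+2}\triangleright x_{i+1}\ (1\le i\le p-1)\rangle$, the fundamental pointed quandle of the $1$-linkoid of $(p,2)$-torus type. For a pointed quandle $\mathcal{X}$, the full pointed quandle coloring quiver $\mathcal{Q}_{\mathcal{X}}(L)$ is the directed multigraph with vertex set $\hom(P(L),\mathcal{X})$ (basepoint-preserving homomorphisms) and, for vertices $\alpha,\beta$, $|\{\varphi\in\operatorname{End}(\mathcal{X}):\varphi\circ\alpha=\beta\}|$ arcs from $\alpha$ to $\beta$, where $\operatorname{End}(\mathcal{X})$ is the set of pointed endomorphisms. $K_{m,k}$ denotes the directed multigraph on vertex set $\{1,\dots,m\}$ with exactly $k$ arcs from $u$ to $v$ for every ordered pair $(u,v)$ (including $u=v$). *)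

From mathcomp Require Import all_boot.
Set Implicit Arguments. Unset Strict Implicit. Unset Printing Implicit Defensive.

(* x |> y = 2y - x (mod n); for x < n, (2y + (n - x)) mod n is exactly that. *)
Lemma dtri_lt (n : nat) (x y : 'I_n) : (2 * y + (n - x)) %% n < n.
Proof. by rewrite ltn_pmod // (leq_ltn_trans (leq0n x) (ltn_ord x)). Qed.

Definition dtri (n : nat) (x y : 'I_n) : 'I_n := Ordinal (dtri_lt x y).

Definition is_pend (n : nat) (y : 'I_n) (phi : {ffun 'I_n -> 'I_n}) : bool :=
  [forall a, forall b, phi (dtri a b) == dtri (phi a) (phi b)] && (phi y == y).

(* ---------- Colorings of P(T~(p,2)) = (Q, x_1, x_{p+1}) ----------
   Q = < x_1..x_{p+1} | x_p = x_2 |> x_{p+1},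
                        x_i = x_{i+2} |> x_{i+1}  (1 <= i <= p-1) >.
   By the universal property of a presented quandle, a homomorphism Q -> Z_n
   is the same as an assignment of the generators satisfying the relations.
   Generator x_{k+1} is stored at index k : 'I_p.+1.
   A basepoint-preserving homomorphism sends x_1 and x_{p+1} to y. *)
Definition gen (p n : nat) (c : {ffun 'I_p.+1 -> 'I_n}) (k : nat) : 'I_n :=
  c (inord k).

Definition is_pcoloring (p n : nat) (y : 'I_n) (c : {ffun 'I_p.+1 -> 'I_n}) : bool :=
  [&& gen c 0 == y, gen c p == y,
      gen c p.-1 == dtri (gen c 1) (gen c p)
    & [forall i : 'I_p, (1 <= i.+1 <= p - 1) ==>
         (gen c i == dtri (gen c i.+2) (gen c i.+1))]].

Definition pcol (p n : nat) (y : 'I_n) :=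
  {c : {ffun 'I_p.+1 -> 'I_n} | is_pcoloring y c}.

Definition quiver_arcs (p n : nat) (y : 'I_n) (a b : pcol p y) : nat :=
  #|[set phi : {ffun 'I_n -> 'I_n} | is_pend y phi &
        [forall k, (val b) k == phi ((val a) k)]]|.

Definition K_arcs (m k : nat) (u v : 'I_m) : nat := k.

Definition multigraph_iso (V W : finType) (a : V -> V -> nat) (b : W -> W -> nat) : Prop :=
  exists f : V -> W, bijective f /\ forall u v, a u v = b (f u) (f v).

(** In [Z_n] the dihedral operation is [a |> b = 2b - a], so the relations
    [x_i = x_(i+2) |> x_(i+1)] force the colours of [x_1, ..., x_(p+1)] to form an
    arithmetic progression [y, y + d, ..., y + p d].  Both basepoints are sent to
    [y], hence [p d = 0], and [d = 0] because [p] is invertible modulo [n]: the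
    constant colouring is the only vertex.  The pointed endomorphisms of
    [(Z_n, y, y)] are the affine maps [x |-> y + a (x - y)], one for each
    [a] in [Z_n], and each of them fixes the constant colouring, giving [n] loops. *)

From mathcomp Require Import all_boot all_algebra ring.
Import GRing.Theory.

Set Implicit Arguments.
Unset Strict Implicit.
Unset Printing Implicit Defensive.

Section ZmodFacts.
Local Open Scope ring_scope.

Lemma arith_progression (V : zmodType) (g : nat -> V) (N : nat) :
    (forall k, (k.+2 <= N)%N -> g k.+2 = g k.+1 *+ 2 - g k) ->
  forall k, (k <= N)%N -> g k = g 0 + (g 1 - g 0) *+ k.
Proof.
move=> rec; set d := g 1 - g 0.
suff step k : (k < N)%N -> g k = g 0 + d *+ k /\ g k.+1 = g 0 + d *+ k.+1.
  by case=> [|k /step[]//]; rewrite mulr0n addr0.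
elim: k => [|k IH] kN; first by rewrite mulr0n mulr1n addr0 addrC subrK.
have [IH1 IH2] := IH (ltnW kN).
split=> //; rewrite rec // IH1 IH2; clearbody d.
rewrite mulr2n !mulrSr; move: (g 0) (d *+ k) => a b.
rewrite opprD addrACA [a + _ - a]addrC addKr addrCA [b + d - b]addrAC subrr.
by rewrite add0r !addrA.
Qed.

Lemma mulrn_unit_eq0 (R : unitRingType) (x : R) (k : nat) :
  (k%:R : R) \is a GRing.unit -> x *+ k = 0 -> x = 0.
Proof. by move=> kU; rewrite -mulr_natl => /(canRL (mulKr kU)); rewrite mulr0. Qed.

End ZmodFacts.

Section DihedralZp.
Variable m : nat.
Local Notation Z := 'Z_(m.+2).
Local Open Scope ring_scope.

Lemma dtriE (a b : Z) : dtri a b = b *+ 2 - a.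
Proof. by apply: val_inj; rewrite /= modnDm mulr1n mul2n addnn. Qed.

Lemma pcoloring_constZp p (y : 'I_m.+2) (c : {ffun 'I_p.+1 -> 'I_m.+2}) :
  coprime p m.+2 -> is_pcoloring y c -> c = [ffun => y].
Proof.
move=> cop /and4P[/eqP c0 /eqP cp _ /forallP crel].
pose g k : Z := gen c k.
have rec k : (k.+2 <= p)%N -> g k.+2 = g k.+1 *+ 2 - g k.
  move=> kp; have kp1 : (k < p - 1)%N by rewrite subn1 ltn_predRL.
  have /implyP/(_ kp1)/eqP ck := crel (Ordinal (ltnW kp)).
  by rewrite /g ck dtriE subKr.
have d0 : g 1 - g 0 = 0.
  apply: (@mulrn_unit_eq0 _ _ p); first by rewrite unitZpE // coprime_sym.
  apply: (@addrI _ (g 0)); rewrite -(arith_progression rec (leqnn p)) addr0.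
  exact: etrans cp (esym c0).
apply/ffunP => j; rewrite ffunE.
have -> : c j = g j by rewrite /g /gen inord_val.
have jp : (j <= p)%N by rewrite -ltnS.
rewrite (arith_progression rec jp) d0 mul0rn addr0; exact: c0.
Qed.

Definition affine_end (y a : Z) : {ffun 'I_m.+2 -> 'I_m.+2} :=
  [ffun x : Z => y + a * (x - y)].

Lemma affine_end_pend y a : is_pend y (affine_end y a).
Proof.
apply/andP; split; last by rewrite ffunE subrr mulr0 addr0.
by apply/forallP => u; apply/forallP => v; rewrite !ffunE !dtriE; apply/eqP; ring.
Qed.

Lemma affine_end_inj y : injective (affine_end y).
Proof.
move=> a b /ffunP/(_ (y + 1)).
by rewrite !ffunE [y + 1]addrC addrK !mulr1 => /addrI.
Qed.

Lemma pend_affine y phi : is_pend y phi -> phi = affine_end y (phi (y + 1) - y).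
Proof.
case/andP => /forallP phiM /eqP phiy.
pose g k : Z := phi (y + k%:R).
have rec k : g k.+2 = g k.+1 *+ 2 - g k.
  rewrite /g; have -> : y + k.+2%:R = dtri (y + k%:R) (y + k.+1%:R) :> Z.
    by rewrite dtriE; ring.
  by rewrite (eqP (forallP (phiM _) _)) dtriE.
apply/ffunP => x; rewrite ffunE.
have := arith_progression (fun k (_ : (k.+2 <= (x - y)%R)%N) => rec k) (leqnn _).
rewrite /g (@natr_Zp m (x - y)) subrKC mulr0n addr0 mulr1n phiy => ->.
by rewrite -mulr_natr (@natr_Zp m (x - y)).
Qed.

Lemma card_pendZp y :
  #|[set phi : {ffun 'I_m.+2 -> 'I_m.+2} | is_pend y phi]| = m.+2.
Proof.
rewrite (_ : [set _ | _] = affine_end y @: [set: Z]).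
  by rewrite card_imset ?cardsT ?card_ord //; apply: affine_end_inj.
apply/setP => phi; rewrite inE; apply/idP/imsetP => [/pend_affine phiE | [a _ ->]].
  by exists (phi (y + 1) - y).
exact: affine_end_pend.
Qed.

End DihedralZp.

Lemma dtri_idem n (x : 'I_n) : dtri x x = x.
Proof.
apply: val_inj => /=.
by rewrite mul2n -addnn -addnA subnKC ?modnDr ?modn_small // ltnW.
Qed.

Lemma const_pcoloring p n (y : 'I_n) :
  is_pcoloring y ([ffun => y] : {ffun 'I_p.+1 -> 'I_n}).
Proof.
rewrite /is_pcoloring /gen !ffunE dtri_idem !eqxx /=.
by apply/forallP => i; rewrite !ffunE dtri_idem eqxx implybT.
Qed.

Lemma pcoloring_const p n (y : 'I_n) (c : {ffun 'I_p.+1 -> 'I_n}) :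
  coprime p n -> is_pcoloring y c -> c = [ffun => y].
Proof.
case: n y c => [|[|m]] y c; first by case: y.
  by move=> _ _; apply/ffunP => j; rewrite ffunE !ord1.
exact: pcoloring_constZp.
Qed.

Lemma card_pend n (y : 'I_n) :
  #|[set phi : {ffun 'I_n -> 'I_n} | is_pend y phi]| = n.
Proof.
case: n y => [|[|m]] y; [by case: y | | exact: card_pendZp].
rewrite (_ : [set _ | _] = setT) ?cardsT ?card_ffun ?card_ord //.
apply/setP => phi; rewrite !inE; apply/andP; split; last by rewrite !ord1.
by apply/forallP => a; apply/forallP => b; rewrite !ord1.
Qed.

Lemma quiver_arcs_const p n (y : 'I_n) (a b : pcol p y) :
  val a = [ffun => y] -> val b = [ffun => y] ->
  quiver_arcs a b = #|[set phi : {ffun 'I_n -> 'I_n} | is_pend y phi]|.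
Proof.
move=> aE bE; apply: eq_card => phi; rewrite !inE aE bE.
case/boolP: (is_pend y phi) => //= /andP[_ /eqP phiy].
by apply/forallP => k; rewrite !ffunE phiy.
Qed.

(* The positivity hypotheses are redundant: [y : 'I_n] forces [0 < n], and
   [coprime p n] for [n > 1] forces [0 < p]. *)
Theorem theorem6p13 (p n : nat) (y : 'I_n) :
  0 < p -> 0 < n -> coprime p n ->
  multigraph_iso (@quiver_arcs p n y) (@K_arcs 1 n).
Proof.
move=> _ _ cop.
have col_const (a : pcol p y) : val a = [ffun => y].
  exact: pcoloring_const cop (valP a).
pose c0 : pcol p y := exist _ [ffun => y] (const_pcoloring p y).
exists (fun _ => ord0); split.
  exists (fun _ => c0) => [a | i]; last by rewrite !ord1.
  by apply: val_inj; rewrite col_const.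
by move=> a b; rewrite /K_arcs -[RHS](card_pend y); apply: quiver_arcs_const.
Qed.
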